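(* ATL and rCTL are incomparable in expressiveness: (i) there is an ATL formula $\psi$ such that for no rCTL formula $\chi$ and truth value $u\in\mathbb{B}_4$ does it hold that $\mathcal{S},s\models\psi\iff V_{rCTL}(s,\chi)\succeq u$ for all concurrent game structures $\mathcal{S}$ and states $s$ (with $V_{rCTL}$ evaluated in the underlying Kripke structure of $\mathcal{S}$); and (ii) there are an rCTL formula $\chi$ and a truth value $u\in\mathbb{B}_4$ such that for no ATL formula $\psi$ does it hold that $\mathcal{S}_\mathcal{K},s\models\psi\iff V_{rCTL}(s,\chi)\succeq u$ for all Kripke structures $\mathcal{K}$ and states $s$.
   Context: Fix a finite set $\mathrm{AP}$ of atomic propositions. A concurrent game structure (CGS) is a tuple $\mathcal{S}=(St,Ag,Ac,\delta,\ell)$ where $St$ is a finite set of states, $Ag$ a finite set of agents, $Ac$ a finite set of actions, $\ell:St\to 2^{\mathrm{AP}}$ a labeling, and $\delta:St\times AV\to St$ a transition function, where $AV$ is the set of action vectors for $Ag$ (an action vector for $A\subseteq Ag$ is a map $A\to Ac$). A state $s'$ is a successor of $s$ if $s'=\delta(s,v)$ for some $v\in AV$. A path is an infinite sequence $\pi=s_0s_1s_2\cdots$ of states with $s_{n+1}$ a successor of $s_n$ for all $n$; write $\pi[n]=s_n$. A strategy for an agent is a function $f:St^+\to Ac$. For $A\subseteq Ag$ and a set $F_A=\{f_a\mid a\in A\}$ of strategies, one for each agent in $A$, $out(s,F_A)$ is the set of paths $s_0s_1\cdots$ with $s_0=s$ such that for every $n\ge 0$ there is $v\in AV$ with $v(a)=f_a(s_0\cdots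 s_n)$ for all $a\in A$ and $s_{n+1}=\delta(s_n,v)$. $\mathbb{B}_4=\{1111,0111,0011,0001,0000\}$ is totally ordered by $1111\succ0111\succ0011\succ0001\succ0000$; for $b=b_1b_2b_3b_4\in\mathbb{B}_4$ and $k\in\{1,2,3,4\}$, $b[k]=b_k$; max and min on $\mathbb{B}_4$ refer to this order, and on bits to $0<1$. ATL formulas: state formulas $\varphi::=p\mid\neg\varphi\mid\varphi\vee\varphi\mid\varphi\wedge\varphi\mid\varphi\to\varphi\mid\langle\!\langle A\rangle\!\rangle\Phi\mid[\![A]\!]\Phi$ and path formulas $\Phi::=\bigcirc\varphi\mid\Diamond\varphi\mid\Box\varphi$, with the standard Boolean semantics: $\mathcal{S},s\models p$ iff $p\in\ell(s)$; Boolean connectives as usual; $\mathcal{S},s\models\langle\!\langle A\rangle\!\rangle\Phi$ iff there is a set $F_A$ of strategies (one per agent in $A$) with $\mathcal{S},\pi\models\Phi$ for all $\pi\in out(s,F_A)$; $\mathcal{S},s\models[\![A]\!]\Phi$ iff for every such $F_A$ some $\pi\in out(s,F_A)$ satisfies $\mathcal{S},\pi\models\Phi$; $\mathcal{S},\pi\models\bigcirc\varphi$ iff $\mathcal{S},\pi[1]\models\varphi$; $\mathcal{S},\pi\models\Diamond\varphi$ iff $\mathcal{S},\pi[i]\models\varphi$ for some $i\ge0$; $\mathcal{S},\pi\models\Box\varphi$ iff $\mathcal{S},\pi[i]\models\varphi$ for all $i\ge0$. A Kripke structure is $\mathcal{K}=(S,I,R,L)$ with finite state set $S$, initial states $I\subseteq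 S$, transition relation $R\subseteq S\times S$ such that every state has an $R$-successor, and labeling $L:S\to2^{\mathrm{AP}}$; a path is an infinite sequence $s_0s_1\cdots$ with $(s_i,s_{i+1})\in R$; $\mathit{paths}(s)$ is the set of paths starting in $s$. rCTL formulas: state formulas $\varphi::=p\mid\neg\varphi\mid\varphi\vee\varphi\mid\varphi\wedge\varphi\mid\varphi\to\varphi\mid\exists\Phi\mid\forall\Phi$, path formulas $\Phi::=\dot\bigcirc\varphi\mid\dot\Diamond\varphi\mid\dot\Box\varphi$. The valuation $V_{rCTL}$ into $\mathbb{B}_4$: $V_{rCTL}(s,p)=1111$ if $p\in L(s)$, else $0000$; $\vee,\wedge$ are max, min; $V_{rCTL}(s,\neg\varphi)=0000$ if $V_{rCTL}(s,\varphi)=1111$, else $1111$; $V_{rCTL}(s,\varphi_1\to\varphi_2)=1111$ if $V_{rCTL}(s,\varphi_1)\preceq V_{rCTL}(s,\varphi_2)$, else $V_{rCTL}(s,\varphi_2)$; $V_{rCTL}(s,\exists\Phi)=\max_{\pi\in\mathit{paths}(s)}V_{rCTL}(\pi,\Phi)$, $V_{rCTL}(s,\forall\Phi)=\min_{\pi\in\mathit{paths}(s)}V_{rCTL}(\pi,\Phi)$; $V_{rCTL}(\pi,\dot\bigcirc\varphi)=V_{rCTL}(\pi[1],\varphi)$; $V_{rCTL}(\pi,\dot\Diamond\varphi)[k]=\max_{i\ge0}V_{rCTL}(\pi[i],\varphi)[k]$; $V_{rCTL}(\pi,\dot\Box\varphi)=b_1b_2b_3b_4$ with $b_1=\min_{i}V_{rCTL}(\pi[i],\varphi)[1]$,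 $b_2=\max_{i}\min_{j\ge i}V_{rCTL}(\pi[j],\varphi)[2]$, $b_3=\min_{i}\max_{j\ge i}V_{rCTL}(\pi[j],\varphi)[3]$, $b_4=\max_{i}V_{rCTL}(\pi[i],\varphi)[4]$. The underlying Kripke structure of a CGS $\mathcal{S}$ has the same states and labeling, with $R=\{(s,s')\mid s'\text{ is a successor of }s\}$. The CGS associated with $\mathcal{K}$ is $\mathcal{S}_\mathcal{K}=(S,\{a\},S,\delta,L)$ with a single agent $a$, actions $S$, and $\delta(s,s')=s'$ if $(s,s')\in R$, and $\delta(s,s')=s''$ for some fixed $s''$ with $(s,s'')\in R$ otherwise. *)

From mathcomp Require Import all_boot.
From mathcomp Require Import boolp.

Set Implicit Arguments.
Unset Strict Implicit.
Unset Printing Implicit Defensive.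

Inductive B4 : Type := B1111 | B0111 | B0011 | B0001 | B0000.

Definition B4rank (b : B4) : nat :=
  match b with B1111 => 4 | B0111 => 3 | B0011 => 2 | B0001 => 1 | B0000 => 0 end.

Definition B4le (u v : B4) : bool := B4rank u <= B4rank v.

Definition B4max (u v : B4) : B4 := if B4le u v then v else u.
Definition B4min (u v : B4) : B4 := if B4le u v then u else v.

Definition B4bit (b : B4) (k : nat) : bool :=
  match b, k with
  | B1111, _ => true
  | B0111, 1 => false | B0111, _ => true
  | B0011, 1 => false | B0011, 2 => false | B0011, _ => true
  | B0001, 4 => true  | B0001, _ => false
  | B0000, _ => false
  end.

(* the element b1b2b3b4 of B4 with the given bits (for monotone bit
   vectors b1 <= b2 <= b3 <= b4, which is the only case arising) *)
Definition B4of (b1 b2 b3 b4 : bool) : B4 :=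
  if b1 then B1111 else if b2 then B0111 else if b3 then B0011
  else if b4 then B0001 else B0000.

Definition B4sup (P : B4 -> Prop) : B4 :=
  if `[< P B1111 >] then B1111 else if `[< P B0111 >] then B0111
  else if `[< P B0011 >] then B0011 else if `[< P B0001 >] then B0001
  else B0000.
Definition B4inf (P : B4 -> Prop) : B4 :=
  if `[< P B0000 >] then B0000 else if `[< P B0001 >] then B0001
  else if `[< P B0011 >] then B0011 else if `[< P B0111 >] then B0111
  else B1111.

Definition natmax (f : nat -> bool) : bool := `[< exists i, f i >].
Definition natmin (f : nat -> bool) : bool := `[< forall i, f i >].

Section Syntax.
Variable AP : Type.

Inductive atl : Type :=
  | Aprop of AP
  | Aneg of atl
  | Aor of atl & atl
  | Aand of atl & atl
  | Aimp of atl & atl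
  | Acoal of seq nat & atl_path
  | Adual of seq nat & atl_path
with atl_path : Type :=
  | Anext of atl
  | Aev of atl
  | Aalw of atl.

Fixpoint atl_agents (f : atl) : seq nat :=
  match f with
  | Aprop _ => [::]
  | Aneg g => atl_agents g
  | Aor g h | Aand g h | Aimp g h => atl_agents g ++ atl_agents h
  | Acoal A P | Adual A P => A ++ atlp_agents P
  end
with atlp_agents (P : atl_path) : seq nat :=
  match P with Anext g | Aev g | Aalw g => atl_agents g end.

Inductive rctl : Type :=
  | Rprop of AP
  | Rneg of rctl
  | Ror of rctl & rctl
  | Rand of rctl & rctl
  | Rimp of rctl & rctl
  | Rex of rctl_path
  | Rall of rctl_path
with rctl_path : Type :=
  | Rnext of rctl
  | Rev of rctl
  | Ralw of rctl.

End Syntax.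

Section Models.
Variable AP : finType.

Record cgs : Type := CGS {
  St : finType;
  Ag : finType;
  agname : Ag -> nat;
  agname_inj : injective agname;
  Ac : finType;
  delta : St -> {ffun Ag -> Ac} -> St;
  ell : St -> {set AP}
}.

Definition successor (S : cgs) (s s' : St S) : bool :=
  [exists v : {ffun Ag S -> Ac S}, delta s v == s'].

Definition cgs_total (S : cgs) : Prop := forall s : St S, exists s', successor s s'.

Definition atl_over (S : cgs) (psi : atl AP) : Prop :=
  {subset atl_agents psi <= codom (@agname S)}.

Section ATLsem.
Variable S : cgs.

Definition coal (A : seq nat) : pred (Ag S) := fun a => agname a \in A.

Definition hist (pi : nat -> St S) (n : nat) : seq (St S) :=
  [seq pi i | i <- iota 0 n.+1].

(* strategies St^+ -> Ac, one for every agent (only those in A matter) *)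
Definition out (s : St S) (A : pred (Ag S)) (F : Ag S -> seq (St S) -> Ac S)
    (pi : nat -> St S) : Prop :=
  pi 0 = s /\
  forall n, exists v : {ffun Ag S -> Ac S},
    (forall a, A a -> v a = F a (hist pi n)) /\ pi n.+1 = delta (pi n) v.

Fixpoint sat (s : St S) (f : atl AP) {struct f} : Prop :=
  match f with
  | Aprop p => p \in ell s
  | Aneg g => ~ sat s g
  | Aor g h => sat s g \/ sat s h
  | Aand g h => sat s g /\ sat s h
  | Aimp g h => sat s g -> sat s h
  | Acoal A P => exists F, forall pi, out s (coal A) F pi -> psat pi P
  | Adual A P => forall F, exists pi, out s (coal A) F pi /\ psat pi P
  end
with psat (pi : nat -> St S) (P : atl_path AP) {struct P} : Prop :=
  match P with
  | Anext g => sat (pi 1) g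
  | Aev g => exists i, sat (pi i) g
  | Aalw g => forall i, sat (pi i) g
  end.

End ATLsem.

Record kripke : Type := Kripke {
  kS : finType;
  kI : {set kS};
  kR : rel kS;
  kL : kS -> {set AP}
}.

Definition kripke_total (K : kripke) : Prop := forall s, exists s', @kR K s s'.

Section rCTLsem.
Variable K : kripke.

Definition kpath (pi : nat -> kS K) : Prop := forall n, @kR K (pi n) (pi n.+1).

Fixpoint Vr (s : kS K) (f : rctl AP) {struct f} : B4 :=
  match f with
  | Rprop p => if p \in @kL K s then B1111 else B0000
  | Rneg g => match Vr s g with B1111 => B0000 | _ => B1111 end
  | Ror g h => B4max (Vr s g) (Vr s h)
  | Rand g h => B4min (Vr s g) (Vr s h)
  | Rimp g h => if B4le (Vr s g) (Vr s h) then B1111 else Vr s h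
  | Rex P => B4sup (fun b => exists pi, [/\ kpath pi, pi 0 = s & Vp pi P = b])
  | Rall P => B4inf (fun b => exists pi, [/\ kpath pi, pi 0 = s & Vp pi P = b])
  end
with Vp (pi : nat -> kS K) (P : rctl_path AP) {struct P} : B4 :=
  match P with
  | Rnext g => Vr (pi 1) g
  | Rev g =>
      let f k i := B4bit (Vr (pi i) g) k in
      B4of (natmax (f 1)) (natmax (f 2)) (natmax (f 3)) (natmax (f 4))
  | Ralw g =>
      let f k i := B4bit (Vr (pi i) g) k in
      B4of (natmin (f 1))
           (natmax (fun i => natmin (fun j => (i <= j) ==> f 2 j)))
           (natmin (fun i => natmax (fun j => (i <= j) && f 3 j)))
           (natmax (f 4))
  end.

End rCTLsem.

Definition kripke_of_cgs (S : cgs) : kripke :=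
  {| kS := St S; kI := setT; kR := @successor S; kL := @ell S |}.

Definition unit_name (_ : unit) : nat := 0.
Lemma unit_name_inj : injective unit_name.
Proof. by case; case. Qed.

Definition kchoice (K : kripke) (s : kS K) : kS K :=
  odflt s [pick s' | @kR K s s'].

Definition cgs_of_kripke (K : kripke) : cgs :=
  {| St := kS K; Ag := unit; agname := unit_name; agname_inj := unit_name_inj;
     Ac := kS K;
     delta := fun s (v : {ffun unit -> kS K}) =>
                if @kR K s (v tt) then v tt else kchoice s;
     ell := @kL K |}.

End Models.

Arguments Vr {AP} K s f.
Arguments Vp {AP} K pi P.

(* (i)  The ATL formula <<0>> X p0 is not captured by any rCTL threshold
        property of the underlying Kripke structure: two games on the same
        complete two-state graph differ only in which agent controls the
        moves, so agent 0 can enforce p0 in one and not in the other.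

   (ii) The rCTL property "E [] p0 >= 0011" (some path visits p0 infinitely
        often) is not expressible in ATL over the single-agent games of
        Kripke structures.  In such a game, coalitions containing agent 0
        act as the CTL path quantifier E and the others as A.  We consider
        ladders of arbitrary height n+1, in which only the top level carries
        a cycle through p0, and show by induction on formulas that every ATL
        formula stops distinguishing levels above some N independent of n,
        using the closure of this "stability" under EX, EF and EG.  The
        ladder of height N+2 then separates levels N+1 and N+2 by recurrence
        of p0, a rank function showing that p0 cannot recur below the top. *)

From mathcomp Require Import all_boot.
From mathcomp Require Import boolp.
From mathcomp Require Import zify.

Set Implicit Arguments.
Unset Strict Implicit.
Unset Printing Implicit Defensive.

Section ControlledGames.
Variables (AP : finType) (p0 : AP).

Lemma nat_of_bool_inj : injective nat_of_bool.
Proof. by case; case. Qed.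

Definition controlled_by (c : bool) : cgs AP :=
  {| St := bool; Ag := bool; agname := nat_of_bool; agname_inj := nat_of_bool_inj;
     Ac := bool; delta := fun _ (v : {ffun bool -> bool}) => v c;
     ell := fun x => if x then [set p0] else set0 |}.

Definition next_p0_by0 : atl AP := Acoal [:: 0] (Anext (Aprop p0)).

Lemma controlled_by_succ c x y : @successor AP (controlled_by c) x y.
Proof. by apply/existsP; exists [ffun _ => y]; rewrite /= ffunE. Qed.

(* Both games have the complete graph on {false, true} as underlying
   Kripke structure, so every rCTL formula has the same value in both. *)
Lemma controlled_by_same_Vr (s : bool) (chi : rctl AP) :
  Vr (kripke_of_cgs (controlled_by false)) s chi =
  Vr (kripke_of_cgs (controlled_by true)) s chi.
Proof.
have same_succ : @successor AP (controlled_by false) = @successor AP (controlled_by true).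
  by apply: funext => x; apply: funext => y; rewrite !controlled_by_succ.
by rewrite /kripke_of_cgs same_succ.
Qed.

(* When agent 0 is in control it moves to state true. *)
Lemma next_p0_by0_controlled : sat (S:=controlled_by false) false next_p0_by0.
Proof.
exists (fun _ _ => true) => pi [_ step]; have [v [Fv pi1]] := step 0.
by rewrite /= pi1 /= Fv ?inE.
Qed.

(* When agent 1 is in control it can keep the play in state false. *)
Lemma next_p0_by0_uncontrolled : ~ sat (S:=controlled_by true) false next_p0_by0.
Proof.
move=> [F FP].
suff out_false : out (S:=controlled_by true) false (coal [:: 0]) F (fun _ => false).
  by have := FP _ out_false; rewrite /= inE.
split=> // n; pose h := hist (S:=controlled_by true) (fun _ => false) n.
exists [ffun a => if a then false else F false h].
by split; [case; rewrite /coal /= ?ffunE | rewrite /= ffunE].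
Qed.

Lemma atl_not_expressible_in_rctl (chi : rctl AP) (u : B4) :
  ~ (forall (S : cgs AP) (s : St S), cgs_total S -> atl_over S next_p0_by0 ->
       (sat s next_p0_by0 <-> B4le u (Vr (kripke_of_cgs S) s chi))).
Proof.
move=> equiv.
have total c : cgs_total (controlled_by c) by move=> s; exists s; exact: controlled_by_succ.
have over c : atl_over (controlled_by c) next_p0_by0.
  by move=> k; rewrite /= mem_seq1 => /eqP ->; apply/codomP; exists false.
have eq0 := equiv (controlled_by false) false (total _) (over _).
have eq1 := equiv (controlled_by true) false (total _) (over _).
rewrite controlled_by_same_Vr in eq0.
by apply: next_p0_by0_uncontrolled; apply/eq1/eq0; exact: next_p0_by0_controlled.
Qed.

End ControlledGames.

Section Outcomes.
Variables (AP : finType) (S : cgs AP).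

Fixpoint play (s : St S) (F : Ag S -> seq (St S) -> Ac S) (n : nat) : seq (St S) :=
  if n is m.+1 then
    rcons (play s F m) (delta (last s (play s F m)) [ffun a => F a (play s F m)])
  else [:: s].

Lemma size_play s F n : size (play s F n) = n.+1.
Proof. by elim: n => //= n IH; rewrite size_rcons IH. Qed.

Lemma nth_play s F n i : i <= n -> nth s (play s F n) i = last s (play s F i).
Proof.
elim: n => [|n IH]; first by rewrite leqn0 => /eqP ->.
rewrite leq_eqVlt => /orP [/eqP ->|lt_in].
  by rewrite /= nth_rcons size_play ltnn eqxx last_rcons.
by rewrite /= nth_rcons size_play lt_in IH.
Qed.

Definition play_path s F : nat -> St S := fun i => last s (play s F i).

Lemma hist_play s F n : hist (play_path s F) n = play s F n.
Proof.
apply: (@eq_from_nth _ s); first by rewrite size_map size_iota size_play.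
move=> i; rewrite size_map size_iota => lt_in.
by rewrite (nth_map 0) ?size_iota // nth_iota // add0n nth_play.
Qed.

Lemma out_play s A F : out s A F (play_path s F).
Proof.
split=> // n; exists [ffun a => F a (play s F n)]; split.
  by move=> a _; rewrite ffunE hist_play.
by rewrite /play_path /= last_rcons.
Qed.

End Outcomes.

Section PathQuantifiers.
Variables (AP : finType) (K : kripke AP).

Definition Ex (x : kS K) (P : (nat -> kS K) -> Prop) :=
  exists pi, [/\ kpath pi, pi 0 = x & P pi].
Definition All (x : kS K) (P : (nat -> kS K) -> Prop) :=
  forall pi, kpath pi -> pi 0 = x -> P pi.

Lemma Ex_ext x P P' : (forall pi, P pi <-> P' pi) -> (Ex x P <-> Ex x P').
Proof. by move=> PP'; split=> -[pi [? ? ?]]; exists pi; split=> //; apply/PP'. Qed.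

Lemma All_Ex x P : All x P <-> ~ Ex x (fun pi => ~ P pi).
Proof.
split; first by move=> H [pi [kp pi0 nP]]; apply: nP; apply: H.
by move=> H pi kp pi0; apply: contrapT => nP; apply: H; exists pi.
Qed.

Definition pcons (x : kS K) (pi : nat -> kS K) : nat -> kS K :=
  fun n => if n is m.+1 then pi m else x.

Lemma kpath_pcons x pi : kR x (pi 0) -> kpath pi -> kpath (pcons x pi).
Proof. by move=> xpi kp; case. Qed.

Lemma kpath_tail (pi : nat -> kS K) : kpath pi -> kpath (fun n => pi n.+1).
Proof. by move=> kp n; apply: kp. Qed.

Lemma ExG_unique_succ (x t : kS K) Q : (forall y, kR x y -> y = t) -> kR x t ->
  (Ex x (fun pi => forall i, Q (pi i)) <-> Q x /\ Ex t (fun pi => forall i, Q (pi i))).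
Proof.
move=> succ_t xt; split.
  move=> [pi [kp pi0 HQ]]; split; first by rewrite -pi0.
  exists (fun n => pi n.+1); split=> //.
  by apply: succ_t; rewrite -pi0; apply: kp.
move=> [Qx [pi [kp pi0 HQ]]]; exists (pcons x pi); split=> //; last by case.
by apply: kpath_pcons; rewrite ?pi0.
Qed.

Lemma ExG_loop x Q : kR x x -> (Ex x (fun pi => forall i, Q (pi i)) <-> Q x).
Proof.
move=> xx; split; first by move=> [pi [_ <- HQ]].
by move=> Qx; exists (fun _ => x); split.
Qed.

Lemma ExF_step x y Q : kR x y -> Ex y (fun pi => exists i, Q (pi i)) ->
  Ex x (fun pi => exists i, Q (pi i)).
Proof.
move=> xy [pi [kp pi0 [i Qi]]]; exists (pcons x pi); split=> //; last by exists i.+1.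
by apply: kpath_pcons; rewrite ?pi0.
Qed.

Lemma ExF_closed (C : kS K -> Prop) x Q : (forall u v, C u -> kR u v -> C v) ->
  C x -> Ex x (fun pi => exists i, Q (pi i)) -> exists y, C y /\ Q y.
Proof.
move=> closedC Cx [pi [kp pi0 [i Qi]]]; exists (pi i); split=> //.
elim: i {Qi} => [|i IH]; first by rewrite pi0.
exact: closedC IH (kp i).
Qed.

End PathQuantifiers.

Section TotalKripke.
Variables (AP : finType) (K : kripke AP).
Hypothesis Ktot : kripke_total K.

Lemma kchoiceP (s : kS K) : kR s (kchoice s).
Proof.
rewrite /kchoice; case: pickP => [//|noR].
by have [y sy] := Ktot s; rewrite noR in sy.
Qed.

Definition default_path (y : kS K) : nat -> kS K := fun n => iter n (@kchoice AP K) y.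

Lemma kpath_default y : kpath (default_path y).
Proof. move=> n; rewrite /default_path iterS; exact: kchoiceP. Qed.

Lemma ExX (x : kS K) Q : Ex x (fun pi => Q (pi 1)) <-> exists y, kR x y /\ Q y.
Proof.
split; first by move=> [pi [kp <- Qpi]]; exists (pi 1).
move=> [y [xy Qy]]; exists (pcons x (default_path y)); split=> //.
exact: kpath_pcons (kpath_default y).
Qed.

Lemma ExF_now (x : kS K) Q : Q x -> Ex x (fun pi => exists i, Q (pi i)).
Proof.
by move=> Qx; exists (default_path x); split=> //; [exact: kpath_default | exists 0].
Qed.

Lemma ExF_unique_succ (x t : kS K) Q : (forall y, kR x y -> y = t) -> kR x t ->
  (Ex x (fun pi => exists i, Q (pi i)) <-> Q x \/ Ex t (fun pi => exists i, Q (pi i))).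
Proof.
move=> succ_t xt; split; last by case=> [/ExF_now|]; [|apply: ExF_step].
move=> [pi [kp pi0 [[|i] Qi]]]; first by left; rewrite -pi0.
right; exists (fun n => pi n.+1); split; [exact: kpath_tail | | by exists i].
by apply: succ_t; rewrite -pi0; apply: kp.
Qed.

End TotalKripke.

Section KripkeGame.
Variables (AP : finType) (K : kripke AP).
Hypothesis Ktot : kripke_total K.
Local Notation G := (cgs_of_kripke K).

Lemma delta_kR s v : kR s (@delta AP G s v).
Proof. by rewrite /=; case: ifP => // _; exact: kchoiceP. Qed.

Lemma out_kpath x A F pi : out (S:=G) x A F pi -> kpath pi /\ pi 0 = x.
Proof. by case=> pi0 step; split=> // n; have [v [_ ->]] := step n; exact: delta_kR. Qed.

Lemma kpath_out x A F pi : 0 \notin A -> kpath pi -> pi 0 = x ->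
  out (S:=G) x (coal A) F pi.
Proof.
move=> A0 kp pi0; split=> // n; exists [ffun _ => pi n.+1]; split.
  by case; rewrite /coal /= (negbTE A0).
by rewrite /= ffunE kp.
Qed.

Definition follow (pi0 : nat -> kS K) : unit -> seq (kS K) -> kS K :=
  fun _ h => pi0 (size h).

Lemma out_follow x A pi0 pi : 0 \in A -> kpath pi0 -> pi0 0 = x ->
  out (S:=G) x (coal A) (follow pi0) pi -> pi = pi0.
Proof.
move=> A0 kp pi00 [pi0x step]; apply: funext; elim=> [|n IH]; first by rewrite pi0x.
have [v [Fv ->]] := step n.
have -> : v = [ffun _ => pi0 n.+1].
  apply/ffunP; case; rewrite ffunE Fv; last by rewrite /coal /= A0.
  by rewrite /follow size_map size_iota.
by rewrite /= ffunE IH kp.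
Qed.

(* The four readings of coalition modalities in the single-agent game:
   << A >> is E and [[ A ]] is A when 0 is in A, and conversely otherwise. *)
Lemma coal_with0 x A P : 0 \in A ->
  ((exists F, forall pi, out (S:=G) x (coal A) F pi -> P pi) <-> Ex x P).
Proof.
move=> A0; split.
  move=> [F FP]; have outF := out_play x (coal A) F.
  by have [kp pi0] := out_kpath outF; exists (play_path x F); split=> //; apply: FP.
move=> [pi0 [kp pi00 P0]]; exists (follow pi0) => pi outpi.
by rewrite (out_follow A0 kp pi00 outpi).
Qed.

Lemma coal_without0 x A P : 0 \notin A ->
  ((exists F, forall pi, out (S:=G) x (coal A) F pi -> P pi) <-> All x P).
Proof.
move=> A0; split; first by move=> [F FP] pi kp pi0; apply: FP; apply: kpath_out.
move=> allP; exists (fun _ _ => x) => pi outpi.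
by have [kp pi0] := out_kpath outpi; exact: allP.
Qed.

Lemma dual_with0 x A P : 0 \in A ->
  ((forall F, exists pi, out (S:=G) x (coal A) F pi /\ P pi) <-> All x P).
Proof.
move=> A0; split.
  move=> H pi0 kp pi00; have [pi [outpi Ppi]] := H (follow pi0).
  by rewrite -(out_follow A0 kp pi00 outpi).
move=> allP F; have outF := out_play x (coal A) F.
by have [kp pi0] := out_kpath outF; exists (play_path x F); split=> //; apply: allP.
Qed.

Lemma dual_without0 x A P : 0 \notin A ->
  ((forall F, exists pi, out (S:=G) x (coal A) F pi /\ P pi) <-> Ex x P).
Proof.
move=> A0; split.
  move=> H; have [pi [outpi Ppi]] := H (fun _ _ => x).
  by have [kp pi0] := out_kpath outpi; exists pi.
by move=> [pi0 [kp pi00 P0]] F; exists pi0; split=> //; apply: kpath_out.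
Qed.

End KripkeGame.

Section Recurrence.
Variables (AP : finType) (p0 : AP).

Definition recurrent (K : kripke AP) (pi : nat -> kS K) :=
  forall i, exists j, i <= j /\ p0 \in kL (pi j).

Lemma B4sup_ge0011 P : B4le B0011 (B4sup P) <-> [\/ P B1111, P B0111 | P B0011].
Proof.
rewrite /B4sup; case: asboolP => h1; first by split=> // _; apply: Or31.
case: asboolP => h2; first by split=> // _; apply: Or32.
case: asboolP => h3; first by split=> // _; apply: Or33.
by case: asboolP => h4; split=> // -[].
Qed.

Lemma B4of_ge0011 b1 b2 b3 b4 : B4le B0011 (B4of b1 b2 b3 b4) = [|| b1, b2 | b3].
Proof. by case: b1; case: b2; case: b3; case: b4. Qed.

Lemma Vp_always_ge0011 (K : kripke AP) pi :
  B4le B0011 (Vp K pi (Ralw (Rprop p0))) <-> recurrent pi.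
Proof.
rewrite /= B4of_ge0011 /natmin /natmax; split.
  case/or3P=> [/asboolP H | /asboolP [i /asboolP H] | /asboolP H] j.
  - by exists j; split=> //; have := H j; case: (p0 \in _).
  - exists (maxn i j); split; first exact: leq_maxr.
    by have := H (maxn i j); rewrite leq_maxl /=; case: (p0 \in _).
  - have /asboolP [k /andP [le_jk pk]] := H j; exists k; split=> //.
    by move: pk; case: (p0 \in _).
move=> H; apply/or3P; apply: Or33; apply/asboolP => i; apply/asboolP.
by have [j [le_ij pj]] := H i; exists j; rewrite le_ij pj.
Qed.

Lemma Ex_always_ge0011 (K : kripke AP) s :
  B4le B0011 (Vr K s (Rex (Ralw (Rprop p0)))) <-> Ex s (@recurrent K).
Proof.
rewrite /= B4sup_ge0011; split.
  by case=> -[pi [kp pi0 E]]; exists pi; split=> //; apply/Vp_always_ge0011; rewrite /= E.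
move=> [pi [kp pi0 rec_pi]]; have := (Vp_always_ge0011 pi).2 rec_pi.
by case E: (Vp K pi _) => // _; [apply: Or31 | apply: Or32 | apply: Or33]; exists pi.
Qed.

End Recurrence.

Section Ladder.
Variables (AP : finType) (p0 : AP) (n : nat).

(* The ladder of height n+1: states plain j and marked j for j <= n+1;
   plain j may stay, step down to plain (j-1) or (if j > 0) go to marked j;
   marked j returns to plain (j-1), except at the top where marked (n+1)
   returns to plain (n+1). *)
Definition lstate : finType := (bool * 'I_n.+2)%type.
Definition back (j : nat) : nat := if j == n.+1 then n.+1 else j.-1.
Definition lrel (x y : lstate) : bool :=
  if x.1 then ~~ y.1 && (val y.2 == back (val x.2))
  else if y.1 then (val y.2 == val x.2) && (0 < val x.2)
  else (val y.2 == val x.2) || (val y.2 == (val x.2).-1).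
Definition llab (x : lstate) : {set AP} := if x.1 then [set p0] else set0.
Definition ladder : kripke AP := {| kS := lstate; kI := setT; kR := lrel; kL := llab |}.

Definition plain j : lstate := (false, inord j).
Definition marked j : lstate := (true, inord j).

Lemma plainE (i : 'I_n.+2) : (false, i) = plain i.
Proof. by rewrite /plain inord_val. Qed.

Lemma markedE (i : 'I_n.+2) : (true, i) = marked i.
Proof. by rewrite /marked inord_val. Qed.

Lemma back_le j : j <= n.+1 -> back j <= j.
Proof. rewrite /back; case: eqP => ?; lia. Qed.

Lemma back_top : back n.+1 = n.+1.
Proof. by rewrite /back eqxx. Qed.

Lemma back_above N j : N.+1 < j <= n.+1 -> N < back j <= n.+1.
Proof. by rewrite /back; case: eqP => ?; lia. Qed.

Lemma lrel_stay j : lrel (plain j) (plain j).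
Proof. by rewrite /lrel /= eqxx. Qed.

Lemma lrel_down j : j <= n.+1 -> lrel (plain j) (plain j.-1).
Proof. by move=> le_j; rewrite /lrel /= !inordK ?eqxx ?orbT //; lia. Qed.

Lemma lrel_mark j : 0 < j -> j <= n.+1 -> lrel (plain j) (marked j).
Proof. by move=> j_gt0 le_j; rewrite /lrel /= inordK // eqxx. Qed.

Lemma lrel_back j : j <= n.+1 -> lrel (marked j) (plain (back j)).
Proof. by move=> le_j; rewrite /lrel /= !inordK ?eqxx //; have := back_le le_j; lia. Qed.

Lemma ord_inord (i : 'I_n.+2) j : val i = j -> i = inord j.
Proof. by move=> <-; rewrite inord_val. Qed.

Lemma lrel_plain_inv j y : j <= n.+1 -> lrel (plain j) y ->
  [\/ y = plain j, y = plain j.-1 | 0 < j /\ y = marked j].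
Proof.
move=> le_j; case: y => [[] i]; rewrite /lrel /= inordK //=.
  by case/andP=> /eqP /ord_inord -> ->; apply: Or33.
by case/orP=> /eqP /ord_inord ->; [apply: Or31 | apply: Or32].
Qed.

Lemma lrel_marked_inv j y : j <= n.+1 -> lrel (marked j) y -> y = plain (back j).
Proof.
by move=> le_j; case: y => [[] i]; rewrite /lrel //= inordK // => /eqP /ord_inord ->.
Qed.

Lemma ladder_total : kripke_total ladder.
Proof.
move=> [[] i]; rewrite ?plainE ?markedE; have le_i := ltn_ord i.
  by exists (plain (back i)); apply: lrel_back.
by exists (plain i); apply: lrel_stay.
Qed.

Definition stable N (Q : lstate -> Prop) := forall j, N < j <= n.+1 ->
  (Q (plain j) <-> Q (plain n.+1)) /\ (Q (marked j) <-> Q (marked n.+1)).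

Lemma stable_ext N Q Q' : (forall x, Q x <-> Q' x) -> stable N Q -> stable N Q'.
Proof. by move=> QQ' sQ j lt_Nj; rewrite -!QQ'; exact: sQ. Qed.

Lemma stable_neg N Q : stable N Q -> stable N (fun x => ~ Q x).
Proof. by move=> sQ j lt_Nj; have [[? ?] [? ?]] := sQ j lt_Nj; split; split; auto. Qed.

Lemma stable_bin N M Q Q' (op : Prop -> Prop -> Prop) :
  (forall A A' B B', (A <-> A') -> (B <-> B') -> (op A B <-> op A' B')) ->
  stable N Q -> stable M Q' -> stable (maxn N M) (fun x => op (Q x) (Q' x)).
Proof.
move=> opE sQ sQ' j lt_j.
have [h1 h2] := sQ j ltac:(lia); have [h3 h4] := sQ' j ltac:(lia).
by split; apply: opE.
Qed.

(* Levels at or below j, excluding the unreachable marked state of level 0;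
   this set is closed under transitions. *)
Definition below j (y : lstate) : Prop := y.2 <= j /\ (y.1 -> 0 < y.2).

Lemma below_closed j x y : below j x -> lrel x y -> below j y.
Proof.
case: x => [[] i] [/= le_ij i_gt0]; rewrite ?plainE ?markedE => xy; have le_i := ltn_ord i.
  by rewrite (lrel_marked_inv le_i xy) /below /= inordK; have := back_le le_i; lia.
by case/(lrel_plain_inv le_i): xy => [->|->|[? ->]]; rewrite /below /= inordK //; lia.
Qed.

Lemma ExF_plain Q j : j <= n.+1 ->
  (@Ex AP ladder (plain j) (fun pi => exists i, Q (pi i)) <-> exists y, below j y /\ Q y).
Proof.
move=> le_j; split.
  by apply: ExF_closed; [exact: below_closed | rewrite /below /= inordK].
have climb k : k <= j -> @Ex AP ladder (plain k) (fun pi => exists i, Q (pi i)) ->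
    @Ex AP ladder (plain j) (fun pi => exists i, Q (pi i)).
  elim: j le_j => [|j IH] le_j le_kj; first by have -> : k = 0 by lia.
  case: (ltngtP k j.+1) => [lt_kj|//|<- //]; last by lia.
  by move=> EFk; apply: (@ExF_step _ ladder _ _ _ (lrel_down le_j)); apply: IH EFk; lia.
move=> [[[] i] [[/= le_ij i_gt0] Qy]]; apply: (climb i) => //; have le_i := ltn_ord i.
  rewrite markedE in Qy.
  apply: (@ExF_step _ ladder _ _ Q (lrel_mark (i_gt0 isT) le_i)).
  exact: (@ExF_now _ _ ladder_total _ Q Qy).
by rewrite plainE in Qy; exact: @ExF_now _ _ ladder_total _ Q Qy.
Qed.

(* The modalities EX, EG and EF preserve stability at the cost of one level:
   the plain states of a level see that level and the one below it. *)
Lemma stable_EX N Q : stable N Q -> stable N.+1 (fun x => exists y, lrel x y /\ Q y).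
Proof.
move=> sQ.
have EXplain j : N.+1 < j <= n.+1 ->
    ((exists y, lrel (plain j) y /\ Q y) <-> Q (plain n.+1) \/ Q (marked n.+1)).
  move=> lt_j; have le_j : j <= n.+1 by lia.
  split.
    move=> [y [xy Qy]]; case/(lrel_plain_inv le_j): xy Qy => [->|->|[_ ->]] Qy.
    - by left; apply/(sQ j ltac:(lia)).1.
    - by left; apply/(sQ j.-1 ltac:(lia)).1.
    - by right; apply/(sQ j ltac:(lia)).2.
  case=> Qtop.
    by exists (plain j); split; [exact: lrel_stay | apply/(sQ j ltac:(lia)).1].
  by exists (marked j); split; [apply: lrel_mark; lia | apply/(sQ j ltac:(lia)).2].
have EXmarked j : N.+1 < j <= n.+1 ->
    ((exists y, lrel (marked j) y /\ Q y) <-> Q (plain n.+1)).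
  move=> lt_j; have le_j : j <= n.+1 by lia.
  have lt_back := back_above lt_j.
  split; first by move=> [y [xy]]; rewrite (lrel_marked_inv le_j xy) => /(sQ _ lt_back).1.
  move=> Qtop; exists (plain (back j)).
  by split; [apply: lrel_back; lia | apply/(sQ _ lt_back).1].
by move=> j lt_j; rewrite !EXplain ?EXmarked //; lia.
Qed.

Lemma stable_EG N Q : stable N Q ->
  stable N.+1 (fun x => @Ex AP ladder x (fun pi => forall i, Q (pi i))).
Proof.
move=> sQ.
have EGplain j : @Ex AP ladder (plain j) (fun pi => forall i, Q (pi i)) <-> Q (plain j).
  by apply: (@ExG_loop _ ladder); exact: lrel_stay.
have EGmarked j : j <= n.+1 -> (@Ex AP ladder (marked j) (fun pi => forall i, Q (pi i))
    <-> Q (marked j) /\ Q (plain (back j))).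
  move=> le_j; have only_back y := @lrel_marked_inv j y le_j.
  rewrite (@ExG_unique_succ _ ladder _ _ _ only_back (lrel_back le_j)).
  by rewrite EGplain.
move=> j lt_j; have lt_back := back_above lt_j.
rewrite !EGplain !EGmarked; try lia.
have [h1 h2] := sQ j ltac:(lia); have [h3 _] := sQ _ lt_back.
by rewrite back_top; move: h1 h2 h3; clear; tauto.
Qed.

Lemma stable_EF N Q : stable N Q ->
  stable N.+1 (fun x => @Ex AP ladder x (fun pi => exists i, Q (pi i))).
Proof.
move=> sQ.
have EFplain j : N < j <= n.+1 ->
    (@Ex AP ladder (plain j) (fun pi => exists i, Q (pi i)) <->
     @Ex AP ladder (plain n.+1) (fun pi => exists i, Q (pi i))).
  move=> lt_j; rewrite !ExF_plain //; try lia; split.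
    by case=> y [[le_y y_gt0] Qy]; exists y; split=> //; split=> //; lia.
  case=> y [[le_y y_gt0] Qy]; case: (leqP y.2 j) => [le_yj|lt_jy].
    by exists y.
  case: y y_gt0 Qy le_y lt_jy => [[] i] /= _; rewrite ?plainE ?markedE => Qy le_i lt_ji.
    exists (marked j); split; first by rewrite /below /= inordK //; lia.
    by apply/(sQ j lt_j).2; apply/(sQ i ltac:(lia)).2.
  exists (plain j); split; first by rewrite /below /= inordK //; lia.
  by apply/(sQ j lt_j).1; apply/(sQ i ltac:(lia)).1.
have EFmarked j : j <= n.+1 ->
    (@Ex AP ladder (marked j) (fun pi => exists i, Q (pi i)) <->
     Q (marked j) \/ @Ex AP ladder (plain (back j)) (fun pi => exists i, Q (pi i))).
  move=> le_j; have only_back y := @lrel_marked_inv j y le_j.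
  exact: (@ExF_unique_succ _ _ ladder_total _ _ Q only_back (lrel_back le_j)).
move=> j lt_j; have lt_back := back_above lt_j.
split; first by rewrite EFplain //; lia.
rewrite !EFmarked ?back_top; try lia.
have [_ h1] := sQ j ltac:(lia); have h2 := EFplain _ lt_back.
by move: h1 h2; clear; tauto.
Qed.

Definition rank (x : lstate) : nat := 2 * x.2 - x.1.

Lemma rank_step x y : below n x -> lrel x y ->
  rank y <= rank x /\ (x.1 -> rank y < rank x).
Proof.
case: x => [[] i] [/= le_in i_gt0]; rewrite ?plainE ?markedE => xy; have le_i := ltn_ord i.
  have := i_gt0 isT; rewrite (lrel_marked_inv le_i xy) /rank /back /= !inordK //.
    by case: eqP => ?; lia.
  by case: eqP => ?; lia.
by case/(lrel_plain_inv le_i): xy => [->|->|[? ->]]; rewrite /rank /= !inordK //; lia.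
Qed.

(* Below the top level, p0 cannot recur: every visit to p0 lowers the rank. *)
Lemma not_recurrent_below j (pi : nat -> lstate) : j <= n -> kpath (K:=ladder) pi ->
  pi 0 = plain j -> ~ @recurrent _ p0 ladder pi.
Proof.
move=> le_jn kp pi0 rec_pi.
have below_pi k : below n (pi k).
  elim: k => [|k IH]; last exact: below_closed IH (kp k).
  by rewrite pi0 /below /= inordK //; lia.
have rank_mono k l : k <= l -> rank (pi l) <= rank (pi k).
  elim: l => [|l IH]; first by rewrite leqn0 => /eqP ->.
  rewrite leq_eqVlt => /orP [/eqP -> //|lt_kl].
  have [step _] := rank_step (below_pi l) (kp l); have := IH lt_kl; lia.
have rank_drop m : exists k, rank (pi k) + m <= rank (pi 0).
  elim: m => [|m [k IH]]; first by exists 0; rewrite addn0.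
  have [l [le_kl pl]] := rec_pi k.
  have marked_l : (pi l).1 by move: pl; rewrite /= /llab; case: (pi l).1; rewrite ?inE.
  have [_ drop] := rank_step (below_pi l) (kp l); have := drop marked_l.
  by have := rank_mono k l le_kl; exists l.+1; lia.
by have [k] := rank_drop (rank (pi 0)).+1; lia.
Qed.

(* At the top level, alternating plain (n+1) and marked (n+1) makes p0 recur. *)
Lemma recurrent_top : Ex (K:=ladder) (plain n.+1) (@recurrent _ p0 ladder).
Proof.
exists (fun i => if odd i then marked n.+1 else plain n.+1); split=> //.
  move=> i /=; case: (odd i) => /=; last exact: lrel_mark.
  by have := lrel_back (leqnn n.+1); rewrite back_top.
move=> i; exists i.*2.+1; split; first by rewrite -addnn; lia.
by rewrite /= odd_double /= /llab /= inE.
Qed.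

End Ladder.

Scheme atl_mut_ind := Induction for atl Sort Prop
  with atl_path_mut_ind := Induction for atl_path Sort Prop.

Section Stabilization.
Variables (AP : finType) (p0 : AP).

Local Notation game n := (cgs_of_kripke (ladder p0 n)).

Definition sat_ladder n (x : lstate n) (f : atl AP) := @sat AP (game n) x f.
Definition psat_ladder n (pi : nat -> lstate n) (P : atl_path AP) := @psat AP (game n) pi P.

Lemma iff_not (A B : Prop) : (A <-> B) -> (~ A <-> ~ B).
Proof. tauto. Qed.

(* Each ATL formula has a level N above which it cannot tell levels apart,
   uniformly in the height of the ladder; path formulas satisfy the same
   both under existential and universal path quantification. *)
Theorem atl_stabilizes (psi : atl AP) :
  exists N, forall n, @stable n N (fun x => sat_ladder x psi).
Proof.
pose stable_path P N := forall n,
  @stable n N (fun x => @Ex AP (ladder p0 n) x (fun pi => psat_ladder pi P)) /\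
  @stable n N (fun x => @All AP (ladder p0 n) x (fun pi => psat_ladder pi P)).
apply: (@atl_mut_ind AP
  (fun f => exists N, forall n, @stable n N (fun x => sat_ladder x f))
  (fun P => exists N, stable_path P N)).
- by move=> p; exists 0 => n j _; split.
- by move=> g [N sg]; exists N => n; apply: stable_neg.
- move=> g [N sg] h [M sh]; exists (maxn N M) => n.
  by apply: (stable_bin (op := or)) => //; tauto.
- move=> g [N sg] h [M sh]; exists (maxn N M) => n.
  by apply: (stable_bin (op := and)) => //; tauto.
- move=> g [N sg] h [M sh]; exists (maxn N M) => n.
  by apply: (stable_bin (op := fun A B => A -> B)) => //; tauto.
- move=> A P [N sP]; exists N => n; have [sE sA] := sP n.
  have tot := @ladder_total AP p0 n.
  case: (boolP (0 \in A)) => A0; apply: stable_ext; [|exact: sE| |exact: sA] => x.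
  + by rewrite /sat_ladder /= (coal_with0 tot _ _ A0).
  + by rewrite /sat_ladder /= (coal_without0 tot _ _ A0).
- move=> A P [N sP]; exists N => n; have [sE sA] := sP n.
  have tot := @ladder_total AP p0 n.
  case: (boolP (0 \in A)) => A0; apply: stable_ext; [|exact: sA| |exact: sE] => x.
  + by rewrite /sat_ladder /= (dual_with0 tot _ _ A0).
  + by rewrite /sat_ladder /= (dual_without0 tot _ _ A0).
- move=> g [N sg]; exists N.+1 => n; have tot := @ladder_total AP p0 n; split.
    apply: stable_ext (stable_EX (sg n)) => x.
    by rewrite (ExX tot x (fun y => sat_ladder y g)).
  apply: stable_ext (stable_neg (stable_EX (stable_neg (sg n)))) => x.
  by rewrite All_Ex (ExX tot x (fun y => ~ sat_ladder y g)).
- move=> g [N sg]; exists N.+1 => n; split; first exact (stable_EF p0 (sg n)).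
  apply: stable_ext (stable_neg (stable_EG p0 (stable_neg (sg n)))) => x.
  rewrite All_Ex; apply: iff_not; apply: Ex_ext => pi.
  by rewrite /psat_ladder /= forallNP.
- move=> g [N sg]; exists N.+1 => n; split; first exact (stable_EG p0 (sg n)).
  apply: stable_ext (stable_neg (stable_EF p0 (stable_neg (sg n)))) => x.
  rewrite All_Ex; apply: iff_not; apply: Ex_ext => pi.
  by rewrite /psat_ladder /= existsNP.
Qed.

End Stabilization.

(* The rCTL property "some path visits p0 infinitely often" (E [] p0 with
   threshold 0011) separates plain (N+1) from plain (N+2) in the ladder of
   height N+2, while no ATL formula stabilizing above N does. *)
Lemma rctl_not_expressible_in_atl (AP : finType) (p0 : AP) (psi : atl AP) :
  ~ (forall (K : kripke AP) (s : kS K), kripke_total K ->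
       (@sat AP (cgs_of_kripke K) s psi <->
        B4le B0011 (Vr K s (Rex (Ralw (Rprop p0)))))).
Proof.
move=> equiv; have [N stab] := atl_stabilizes p0 psi.
have total := @ladder_total AP p0 N.+1.
have [same_level _] := stab N.+1 N.+1 ltac:(lia).
have at_top := equiv (ladder p0 N.+1) (plain N.+1 N.+2) total.
have at_level := equiv (ladder p0 N.+1) (plain N.+1 N.+1) total.
have rec_top : B4le B0011 (Vr (ladder p0 N.+1) (plain N.+1 N.+2) (Rex (Ralw (Rprop p0)))).
  exact/Ex_always_ge0011/recurrent_top.
have [pi [kp pi0 rec_pi]] :
    Ex (K:=ladder p0 N.+1) (plain N.+1 N.+1) (@recurrent _ p0 (ladder p0 N.+1)).
  by apply/Ex_always_ge0011/at_level/same_level/at_top.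
exact: not_recurrent_below (leqnn _) kp pi0 rec_pi.
Qed.

Theorem corollary1 (AP : finType) (p0 : AP) :
  (exists psi : atl AP,
     forall (chi : rctl AP) (u : B4),
       ~ (forall (S : cgs AP) (s : St S),
            cgs_total S -> atl_over S psi ->
            (sat s psi <-> B4le u (Vr (kripke_of_cgs S) s chi))))
  /\
  (exists (chi : rctl AP) (u : B4),
     forall psi : atl AP, {subset atl_agents psi <= [:: 0]} ->
       ~ (forall (K : kripke AP) (s : kS K),
            kripke_total K ->
            (@sat AP (cgs_of_kripke K) s psi <-> B4le u (Vr K s chi)))).
Proof.
split; first by exists (next_p0_by0 p0); exact: atl_not_expressible_in_rctl.
by exists (Rex (Ralw (Rprop p0))), B0011 => psi _; exact: rctl_not_expressible_in_atl.
Qed.
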